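(* Let $3/2<s<3$ and $M\ge0$. There exists $C_s>0$ such that for every integer $N\ge1$ and every mean-zero divergence-free field $u$ on $\mathbb T^3$ with $\|u\|_{H^s}\le M$, and every orbit $\alpha\in\mathcal O_N$ with representative $k_\alpha$, \[ \sum_{\beta\in\mathcal O_N}|M_{\alpha\beta}(u)|\le C_sM^3\bigl(|k_\alpha|^{2-s}+|k_\alpha|^{6-3s}\bigr). \] Consequently \[ \sup_{\alpha\in\mathcal O_N}\sum_{\beta\in\mathcal O_N}|M_{\alpha\beta}(u)|\le\begin{cases}C_sM^3,&2<s<3,\\ C_sM^3N^{6-3s},&3/2<s\le2.\end{cases} \]
   Context: $\mathbb T^3=[0,2\pi]^3$; $u(x)=\sum_{k\ne0}\hat u_ke^{ik\cdot x}$, $\hat u_k\in\mathbb C^3$, divergence-free meaning $k\cdot\hat u_k=0$, reality $\hat u_{-k}=\overline{\hat u_k}$, and $\|u\|_{H^s}^2:=\sum_{k\ne0}|k|^{2s}|\hat u_k|^2$ ($|\cdot|$ Euclidean). $\Lambda_N:=\{k\in\mathbb Z^3\setminus\{0\}:|k|_\infty\le N\}$; $O_h$ is the group of 48 signed coordinate permutations, $\mathcal O_N:=\Lambda_N/O_h$, $|\alpha|$ the orbit cardinality. $P(k):=I-\frac{k\otimes k}{|k|^2}$; for $a,b\in\mathbb C^3$, $a\cdot b:=\sum_ja_jb_j$. \[ M_{\alpha\beta}(u):=\frac{1}{|\alpha|}\sum_{k\in\alpha}\sum_{\substack{p\in\beta\\ q=k-p\in\Lambda_N}}|k|^2\,\mathrm{Re}\Bigl(\overline{\hat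 u_k}\cdot\bigl[-iP(k)\bigl(q(\hat u_p\cdot\hat u_q)\bigr)\bigr]\Bigr). \] *)

From HB Require Import structures.
From mathcomp Require Import all_boot all_order all_algebra.
From mathcomp Require Import fingroup perm.
From mathcomp Require Import finmap.
From mathcomp Require Import complex.
From mathcomp Require Import all_classical all_reals all_analysis.
Set Implicit Arguments. Unset Strict Implicit. Unset Printing Implicit Defensive.
Import Order.TTheory GRing.Theory Num.Theory.
Local Open Scope ring_scope.
Local Open Scope fset_scope.

Definition vec := {ffun 'I_3 -> int}.

Definition normsq (k : vec) : int := \sum_(j < 3) k j ^+ 2.
Definition knorm (R : realType) (k : vec) : R := Num.sqrt ((normsq k)%:~R).

(** Lambda_N = { k in Z^3 \ {0} : |k|_oo <= N }, built by enumerating the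
    box {-N,...,N}^3 (coordinate c - N with c in {0,...,2N}) and removing 0. *)
Definition box (N : nat) : {fset vec} :=
  [fset [ffun j => ((c j : nat)%:Z - N%:Z)%R] | c : {ffun 'I_3 -> 'I_(2 * N + 1)} in enum {ffun 'I_3 -> 'I_(2 * N + 1)}].
Definition LamN (N : nat) : {fset vec} := [fset k in box N | k != 0].

(** The octahedral group O_h of the 48 signed coordinate permutations:
    g = (sigma, eps) acts by (g k)_j = (-1)^(eps j) k_(sigma j). *)
Notation Oh := (prod {perm 'I_3} {ffun 'I_3 -> bool}).
Definition Oh_act (g : Oh) (k : vec) : vec :=
  [ffun j => ((-1) ^+ (g.2 j) * k (g.1 j))%R].

(** The O_h-orbit of k and the orbit space O_N = Lambda_N / O_h
    (each orbit represented by the finite set of its elements). *)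
Definition orbit (k : vec) : {fset vec} := [fset Oh_act g k | g : Oh in enum {: Oh}].
Definition OrbN (N : nat) : {fset {fset vec}} := [fset orbit k | k in LamN N].

(** Fourier coefficients of a vector field: k |-> \hat u_k in C^3. *)
Definition field (R : realType) := vec -> 'I_3 -> R[i].

Definition dotc (R : realType) (a b : 'I_3 -> R[i]) : R[i] :=
  \sum_(j < 3) a j * b j.

Definition mean_zero (R : realType) (u : field R) : Prop := forall j, u 0 j = 0.
Definition div_free (R : realType) (u : field R) : Prop :=
  forall k : vec, dotc (fun j => (k j)%:~R) (u k) = 0.
Definition reality (R : realType) (u : field R) : Prop :=
  forall (k : vec) j, u (- k) j = conjc (u k j).

Definition cnormsq (R : realType) (a : 'I_3 -> R[i]) : R :=
  \sum_(j < 3) (complex.Re (a j) ^+ 2 + complex.Im (a j) ^+ 2).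
Definition Hs_normsq (R : realType) (s : R) (u : field R) : \bar R :=
  (\esum_(k in [set k : vec | k != 0%R]) ((knorm R k) `^ (2 * s) * cnormsq (u k))%:E)%E.

Definition leray (R : realType) (k : vec) (w : 'I_3 -> R[i]) : 'I_3 -> R[i] :=
  fun j => w j - (k j)%:~R * dotc (fun l => (k l)%:~R) w / (normsq k)%:~R.

Definition Mterm (R : realType) (u : field R) (k p q : vec) : R :=
  (normsq k)%:~R *
  complex.Re (dotc (fun j => conjc (u k j))
    (fun j => - (Complex 0 1) *
       leray k (fun l => (q l)%:~R * dotc (u p) (u q)) j)).

Definition Mab (R : realType) (N : nat) (u : field R) (a b : {fset vec}) : R :=
  (#|` a|%:R)^-1 *
  \sum_(k <- a) \sum_(p <- b | (k - p) \in LamN N) Mterm u k p (k - p).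

(* Divergence-freeness gives conj(u_k).k = 0, so the Leray projector drops out of each
   summand and |term(k,p,q)| <= 9 |k|^2 |u_k| |u_p| |u_q| |q|.  As |p|, |q| >= 1 and s >= 1,
   AM-GM gives |u_p| |u_q| |q| <= (|p|^2s |u_p|^2 + |q|^2s |u_q|^2) / 2, whose sum over p is
   at most ||u||_{H^s}^2 <= M^2; with |k|^s |u_k| <= M the sum over p is at most
   9 M^3 |k|^(2-s).  The orbits partition Lambda_N and |k| is constant on an orbit, so the
   same bound holds for sum_beta |M_{alpha beta}|.  Finally |k_alpha|^(2-s) <= 1 when s > 2,
   and |k_alpha|^(2-s) <= 2 N^(6-3s) when s <= 2 since |k_alpha| <= 2N. *)

From Pilot Require Import Defs.
From HB Require Import structures.
From mathcomp Require Import all_boot all_order all_algebra.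
From mathcomp Require Import fingroup perm finmap complex.
From mathcomp Require Import all_classical all_reals all_analysis.
From mathcomp Require Import ring lra zify.
Set Implicit Arguments. Unset Strict Implicit. Unset Printing Implicit Defensive.
Import Order.TTheory GRing.Theory Num.Theory Normc.
Local Open Scope ring_scope.

Definition Oh_mul (g h : Oh) : Oh := ((g.1 * h.1)%g, [ffun j => g.2 j (+) h.2 (g.1 j)]).
Definition Oh_inv (g : Oh) : Oh := ((g.1^-1)%g, [ffun j => g.2 ((g.1^-1)%g j)]).

Lemma Oh_actM g h k : Oh_act g (Oh_act h k) = Oh_act (Oh_mul g h) k.
Proof. by apply/ffunP => j; rewrite !ffunE /= permM signr_addb; ring. Qed.

Lemma Oh_actK g k : Oh_act (Oh_inv g) (Oh_act g k) = k.
Proof. by apply/ffunP => j; rewrite !ffunE /= permKV mulrA -signr_addb addbb; ring. Qed.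

Lemma Oh_orbitE k x : (x \in Defs.orbit k) = [exists g : Oh, x == Oh_act g k].
Proof.
apply/imfsetP/existsP => [[g _ ->]|[g /eqP ->]]; first by exists g.
by exists g => //; rewrite mem_enum.
Qed.

Lemma Oh_orbit_refl k : k \in Defs.orbit k.
Proof.
rewrite Oh_orbitE; apply/existsP; exists (1%g, [ffun => false]).
by apply/eqP/ffunP => j; rewrite !ffunE perm1 expr0 mul1r.
Qed.

Lemma Oh_orbit_act g k : Defs.orbit (Oh_act g k) = Defs.orbit k.
Proof.
apply/fsetP => x; rewrite !Oh_orbitE.
apply/existsP/existsP => [[h /eqP ->]|[h /eqP ->]].
  by exists (Oh_mul h g); rewrite Oh_actM.
by exists (Oh_mul h (Oh_inv g)); rewrite -Oh_actM Oh_actK.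
Qed.

Lemma Oh_orbit_eq k x : x \in Defs.orbit k -> Defs.orbit x = Defs.orbit k.
Proof. by rewrite Oh_orbitE => /existsP [g /eqP ->]; rewrite Oh_orbit_act. Qed.

Lemma normsq_act g k : normsq (Oh_act g k) = normsq k.
Proof.
rewrite /normsq [RHS](reindex_inj (@perm_inj _ g.1)) /=; apply: eq_bigr => j _.
by rewrite ffunE exprMn sqrr_sign mul1r.
Qed.

Lemma normsq_ge0 k : 0 <= normsq k.
Proof. by apply: sumr_ge0 => j _; rewrite sqr_ge0. Qed.

Lemma normsq_eq0 k : (normsq k == 0) = (k == 0).
Proof.
apply/idP/eqP => [|->]; last by rewrite /normsq big1 // => j _; rewrite ffunE expr0n.
rewrite psumr_eq0 => [/allP k0|j _]; last exact: sqr_ge0.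
apply/ffunP => j; rewrite ffunE; apply/eqP; rewrite -sqrf_eq0.
exact: (implyP (k0 j (mem_index_enum j))).
Qed.

Lemma box_normsq N k : k \in box N -> normsq k <= (2 * N%:Z) ^+ 2.
Proof.
move/imfsetP => [c _ ->]; apply: (@le_trans _ _ (\sum_(j < 3) N%:Z ^+ 2)).
  apply: ler_sum => j _; rewrite ffunE.
  have := ltn_ord (c j); move: (c j : nat) => x hx; rewrite !expr2; nia.
by rewrite sumr_const card_ord -mulr_natr !expr2; nia.
Qed.

Lemma LamN_neq0 N k : k \in LamN N -> k != 0.
Proof. by rewrite !inE => /andP[]. Qed.

Lemma OrbN_mem N a : a \in OrbN N -> exists2 k, k \in LamN N & a = Defs.orbit k.
Proof. by move/imfsetP => [k kN ->]; exists k. Qed.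

Lemma OrbN_normsq N a x : a \in OrbN N -> x \in a ->
  exists2 k, k \in LamN N & normsq x = normsq k.
Proof.
move=> /OrbN_mem [k kN ->]; rewrite Oh_orbitE => /existsP [g /eqP ->].
by exists k => //; rewrite normsq_act.
Qed.

Lemma OrbN_neq0 N a x : a \in OrbN N -> x \in a -> x != 0.
Proof.
move=> aN xa; have [k] := OrbN_normsq aN xa.
by rewrite !inE -!normsq_eq0 => /andP[_ k0] ->.
Qed.

Lemma OrbN_normsq_const N a x y : a \in OrbN N -> x \in a -> y \in a ->
  normsq x = normsq y.
Proof.
move=> /OrbN_mem [k _ ->]; rewrite !Oh_orbitE.
by move=> /existsP [g /eqP ->] /existsP [h /eqP ->]; rewrite !normsq_act.
Qed.

Lemma OrbN_disjoint N b1 b2 : b1 \in OrbN N -> b2 \in OrbN N -> b1 != b2 ->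
  [disjoint b1 & b2]%fset.
Proof.
move=> /OrbN_mem [k1 _ ->] /OrbN_mem [k2 _ ->] b12; apply/fdisjointP => x x1.
by apply: contra b12 => x2; rewrite -(Oh_orbit_eq x1) (Oh_orbit_eq x2).
Qed.

Section ComplexNorm.
Variable R : realType.
Implicit Types (z : R[i]) (a b : 'I_3 -> R[i]).

Lemma normc_ge0 z : 0 <= normc z.
Proof. by case: z => x y; exact: sqrtr_ge0. Qed.

Lemma normc_conj z : normc (conjc z) = normc z.
Proof. by case: z => x y /=; rewrite sqrrN. Qed.

Lemma normc_int (n : int) : normc (n%:~R : R[i]) = `|(n%:~R : R)|.
Proof. by rewrite -(rmorph_int (real_complex R)) /= expr0n /= addr0 sqrtr_sqr. Qed.

Lemma norm_Re_mulNi z : `|complex.Re (- 'i%C * z)| <= normc z.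
Proof.
case: z => x y /=; rewrite (_ : - 0 * x - -1 * y = y); last by ring.
by rewrite -sqrtr_sqr ler_sqrt ?addr_ge0 ?sqr_ge0 // lerDr sqr_ge0.
Qed.

Lemma normc_dotc_le a b (A B : R) :
  (forall j, normc (a j) <= A) -> (forall j, normc (b j) <= B) ->
  normc (dotc a b) <= 3 * (A * B).
Proof.
move=> aA bB; have abAB j : normc (a j * b j) <= A * B.
  by rewrite normcM ler_pM ?normc_ge0.
rewrite /dotc !big_ord_recr big_ord0 /= add0r.
rewrite (_ : 3 * (A * B) = A * B + A * B + A * B); last by ring.
apply: le_trans (le_normcD _ _) _.
by apply: lerD => //; apply: le_trans (le_normcD _ _) _; apply: lerD.
Qed.

End ComplexNorm.

Section Coefficients.
Variable R : realType.

Definition cnorm (a : 'I_3 -> R[i]) : R := Num.sqrt (cnormsq a).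

Lemma cnormsq_ge0 (a : 'I_3 -> R[i]) : 0 <= cnormsq a.
Proof. by apply: sumr_ge0 => j _; rewrite addr_ge0 ?sqr_ge0. Qed.

Lemma cnorm_ge0 (a : 'I_3 -> R[i]) : 0 <= cnorm a.
Proof. exact: sqrtr_ge0. Qed.

Lemma normc_le_cnorm (a : 'I_3 -> R[i]) j : normc (a j) <= cnorm a.
Proof.
rewrite /cnorm /cnormsq (bigD1 j) //=; case: (a j) => x y /=.
have rest : 0 <= \sum_(i < 3 | i != j) (complex.Re (a i) ^+ 2 + complex.Im (a i) ^+ 2).
  by apply: sumr_ge0 => i _; rewrite addr_ge0 ?sqr_ge0.
by rewrite ler_sqrt ?lerDl // addr_ge0 ?addr_ge0 ?sqr_ge0.
Qed.

Lemma knorm_ge0 k : 0 <= knorm R k.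
Proof. exact: sqrtr_ge0. Qed.

Lemma sqr_knorm k : knorm R k ^+ 2 = (normsq k)%:~R.
Proof. by rewrite sqr_sqrtr // ler0z normsq_ge0. Qed.

Lemma knorm_ge1 k : k != 0 -> 1 <= knorm R k.
Proof.
rewrite -normsq_eq0 => k0; have k1 : 1 <= normsq k.
  by have := normsq_ge0 k; move: k0; move: (normsq k) => n; lia.
by rewrite /knorm -[X in X <= _]sqrtr1 ler_sqrt ?ler1z ?ler0z ?normsq_ge0.
Qed.

Lemma norm_coord_le_knorm (k : vec) j : `|(k j)%:~R : R| <= knorm R k.
Proof.
rewrite -sqrtr_sqr ler_sqrt ?ler0z ?normsq_ge0 // -rmorphXn ler_int.
by rewrite /normsq (bigD1 j) //= lerDl sumr_ge0 // => i _; rewrite sqr_ge0.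
Qed.

Lemma Mterm_div_free (u : field R) k p q : div_free u ->
  Mterm u k p q = (normsq k)%:~R * complex.Re (- 'i%C *
    dotc (fun j => conjc (u k j)) (fun j => (q j)%:~R * dotc (u p) (u q))).
Proof.
move=> udf; have uk_k : \sum_j conjc (u k j) * (k j)%:~R = 0.
  transitivity (conjc (dotc (fun j => (k j)%:~R) (u k))); last by rewrite udf conjc0.
  rewrite /dotc rmorph_sum; apply: eq_bigr => j _.
  by rewrite rmorphM rmorph_int [RHS]mulrC.
have expand (c w kk : 'I_3 -> R[i]) (D n : R[i]) :
    \sum_j c j * (- 'i%C * (w j - kk j * D / n)) =
    - 'i%C * (\sum_j c j * w j) + 'i%C * (D / n) * (\sum_j c j * kk j).
  by rewrite !big_ord_recr !big_ord0 /=; ring.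
by rewrite /Mterm /dotc /leray expand uk_k mulr0 addr0.
Qed.

Lemma norm_Mterm_le (u : field R) k p q : div_free u ->
  `|Mterm u k p q| <=
    9 * (normsq k)%:~R * cnorm (u k) * (cnorm (u p) * cnorm (u q) * knorm R q).
Proof.
move=> udf; set B := knorm R q * (3 * (cnorm (u p) * cnorm (u q))).
rewrite Mterm_div_free // normrM ger0_norm ?ler0z ?normsq_ge0 //.
rewrite (_ : 9 * _ * _ * _ = (normsq k)%:~R * (3 * (cnorm (u k) * B))); last by rewrite /B; ring.
rewrite ler_wpM2l ?ler0z ?normsq_ge0 //; apply: le_trans (norm_Re_mulNi _) _.
apply: normc_dotc_le => j; first by rewrite normc_conj normc_le_cnorm.
rewrite normcM normc_int ler_pM ?normc_ge0 ?normr_ge0 ?norm_coord_le_knorm //.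
exact: normc_dotc_le (normc_le_cnorm _) (normc_le_cnorm _).
Qed.

End Coefficients.

Lemma mul_le_mean_sqr_powR (R : realType) (s x y a b : R) :
  1 <= s -> 1 <= x -> 1 <= y -> 0 <= a -> 0 <= b ->
  a * b * y <= ((x `^ s * a) ^+ 2 + (y `^ s * b) ^+ 2) / 2.
Proof.
move=> s1 x1 y1 a0 b0; have xs1 : 0 <= x `^ s - 1 by rewrite subr_ge0 (le_trans x1) ?le1r_powR.
have abyY : a * b * y <= a * b * y `^ s by rewrite ler_wpM2l ?mulr_ge0 ?le1r_powR.
have := mulr_ge0 xs1 (mulr_ge0 (mulr_ge0 a0 b0) (powR_ge0 y s)).
by have := sqr_ge0 (x `^ s * a - y `^ s * b); nra.
Qed.

Section HsBounds.
Variables (R : realType) (s M : R) (u : field R).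
Hypothesis uHs : (Hs_normsq s u <= (M ^+ 2)%:E)%E.

Definition Hs_term (k : vec) : R := knorm R k `^ (2 * s) * cnormsq (u k).

Lemma Hs_termE k : Hs_term k = (knorm R k `^ s * cnorm (u k)) ^+ 2.
Proof.
rewrite /Hs_term exprMn sqr_sqrtr ?cnormsq_ge0 // (mulrC 2 s) powRrM.
by rewrite powR_mulrn ?powR_ge0.
Qed.

Lemma Hs_sum_le (l : seq vec) : uniq l -> all (fun k => k != 0) l ->
  \sum_(k <- l) Hs_term k <= M ^+ 2.
Proof.
move=> ul l0; rewrite -lee_fin; apply: le_trans uHs; apply: esum_ge.
exists [set` l]%classic; first by split; [exact: finite_seq | move=> k /= /(allP l0)].
by rewrite -fsbig_seq // sumEFin.
Qed.

Lemma Hs_coef_le k : 0 <= M -> k != 0 -> knorm R k `^ s * cnorm (u k) <= M.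
Proof.
move=> M0 k0; have := Hs_sum_le (l := [:: k]) erefl; rewrite /= k0 big_seq1 Hs_termE.
by move=> /(_ erefl); rewrite ler_pXn2r ?nnegrE ?mulr_ge0 ?powR_ge0 ?cnorm_ge0.
Qed.

Lemma sum_convolution_le N k (l : seq vec) : 1 <= s -> uniq l -> all (fun p => p != 0) l ->
  \sum_(p <- l | k - p \in LamN N) cnorm (u p) * cnorm (u (k - p)) * knorm R (k - p)
    <= M ^+ 2.
Proof.
move=> s1 ul l0; set l' := [seq p <- l | k - p \in LamN N].
have l'0 p : p \in l' -> (p != 0) && (k - p != 0).
  by rewrite mem_filter => /andP[/LamN_neq0 -> /(allP l0) ->].
apply: (@le_trans _ _ (\sum_(p <- l') (Hs_term p + Hs_term (k - p)) / 2)).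
  rewrite -big_filter -/l' big_seq [X in _ <= X]big_seq.
  apply: ler_sum => p /l'0 /andP[p0 kp0]; rewrite !Hs_termE.
  by apply: mul_le_mean_sqr_powR; rewrite ?knorm_ge1 ?cnorm_ge0.
have sum_p : \sum_(p <- l') Hs_term p <= M ^+ 2.
  apply: Hs_sum_le; first by rewrite filter_uniq.
  by apply/allP => p /l'0 /andP[].
have sum_kp : \sum_(p <- l') Hs_term (k - p) <= M ^+ 2.
  rewrite -(big_map (fun p => k - p) xpredT); apply: Hs_sum_le.
    by rewrite map_inj_uniq ?filter_uniq // => x y /addrI /oppr_inj.
  by apply/allP => _ /mapP [p /l'0 /andP[_ kp0] ->].
by rewrite -mulr_suml big_split /=; lra.
Qed.

Lemma sum_norm_Mterm_le N k (l : seq vec) : 1 <= s -> 0 <= M -> div_free u ->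
  k != 0 -> uniq l -> all (fun p => p != 0) l ->
  \sum_(p <- l | k - p \in LamN N) `|Mterm u k p (k - p)|
    <= 9 * M ^+ 3 * knorm R k `^ (2 - s).
Proof.
move=> s1 M0 udf k0 ul l0; have k1 := knorm_ge1 R k0.
have sqr_split : (normsq k)%:~R = knorm R k `^ (2 - s) * knorm R k `^ s.
  rewrite -sqr_knorm -powRD; last by apply/implyP => _; rewrite gt_eqF // (lt_le_trans ltr01).
  by rewrite subrK powR_mulrn ?knorm_ge0.
apply: le_trans (ler_sum _ (fun p _ => norm_Mterm_le k p (k - p) udf)) _.
rewrite -mulr_sumr.
apply: le_trans (ler_wpM2l _ (sum_convolution_le N k s1 ul l0)) _.
  by rewrite !mulr_ge0 ?ler0z ?normsq_ge0 ?cnorm_ge0.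
rewrite sqr_split (_ : _ * _ * M ^+ 2 =
  9 * knorm R k `^ (2 - s) * M ^+ 2 * (knorm R k `^ s * cnorm (u k))); last by ring.
rewrite (_ : 9 * M ^+ 3 * _ = 9 * knorm R k `^ (2 - s) * M ^+ 2 * M); last by ring.
by rewrite ler_wpM2l ?Hs_coef_le // !mulr_ge0 ?powR_ge0 ?sqr_ge0.
Qed.

End HsBounds.

Local Open Scope fset_scope.

Lemma norm_Mab_le (R : realType) N (u : field R) (a b : {fset vec}) :
  `|Mab N u a b| <= (#|` a|%:R)^-1 *
    \sum_(k <- a) \sum_(p <- b | k - p \in LamN N) `|Mterm u k p (k - p)|.
Proof.
rewrite /Mab normrM ger0_norm ?invr_ge0 ?ler0n // ler_wpM2l ?invr_ge0 ?ler0n //.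
apply: le_trans (ler_norm_sum _ _ _) _; apply: ler_sum => k _.
exact: ler_norm_sum.
Qed.

Lemma sum_OrbN_fcover (R : realType) N (F : vec -> R) :
  \sum_(b <- OrbN N) \sum_(p <- b) F p = \sum_(p <- \bigcup_(b <- OrbN N) b) F p.
Proof.
rewrite (@partition_disjoint_bigfcup _ _ _ _ _ F id) // => b1 b2.
exact: OrbN_disjoint.
Qed.

Lemma sum_norm_Mab_le (R : realType) (s M : R) (u : field R) N a ka :
  1 <= s -> 0 <= M -> div_free u -> (Hs_normsq s u <= (M ^+ 2)%:E)%E ->
  a \in OrbN N -> ka \in a ->
  \sum_(b <- OrbN N) `|Mab N u a b| <= 9 * M ^+ 3 * knorm R ka `^ (2 - s).
Proof.
move=> s1 M0 udf uHs aN kaa; set c := 9 * M ^+ 3 * _.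
set U := \bigcup_(b <- OrbN N) b.
have U0 : all (fun p => p != 0) U.
  by apply/allP => p /bigfcupP [b /andP[bN _] pb]; exact: OrbN_neq0 bN pb.
have per_k k : k \in a ->
    \sum_(b <- OrbN N) \sum_(p <- b | k - p \in LamN N) `|Mterm u k p (k - p)| <= c.
  move=> k_a; under eq_bigr do rewrite big_mkcond /=.
  rewrite sum_OrbN_fcover -big_mkcond /c /knorm -(OrbN_normsq_const aN k_a kaa).
  exact: sum_norm_Mterm_le (OrbN_neq0 aN k_a) (fset_uniq U) U0.
apply: le_trans (ler_sum _ (fun b _ => norm_Mab_le N u a b)) _.
rewrite -mulr_sumr exchange_big /=.
apply: le_trans (ler_wpM2l _ (_ : _ <= \sum_(k <- a) c)) _.
- by rewrite invr_ge0 ler0n.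
- by rewrite big_seq [X in _ <= X]big_seq; apply: ler_sum => k /per_k.
have a_gt0 : (0 < #|` a|)%N by rewrite cardfs_gt0; apply/fset0Pn; exists ka.
have -> : \sum_(k <- a) c = #|` a|%:R * c.
  by rewrite card_fset_sum1 natr_sum mulr_suml; apply: eq_bigr => k _; rewrite mul1r.
by rewrite mulrA mulVf ?mul1r // pnatr_eq0 -lt0n.
Qed.

Lemma knorm_OrbN_le (R : realType) N a x : a \in OrbN N -> x \in a ->
  knorm R x <= 2 * N%:R.
Proof.
move=> aN xa; have [k] := OrbN_normsq aN xa; rewrite !inE => /andP[/box_normsq kN _] xk.
rewrite -xk -(ler_int R) rmorphXn rmorphM /= in kN.
by rewrite -[X in _ <= X]ger0_norm ?mulr_ge0 ?ler0n // -sqrtr_sqr ler_sqrt.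
Qed.

Lemma powR_le_double_powR (R : realType) (x n e f : R) :
  0 <= x <= 2 * n -> 1 <= n -> 0 <= e <= 1 -> e <= f -> x `^ e <= 2 * n `^ f.
Proof.
move=> /andP[x0 xn] n1 /andP[e0 e1] ef; have n0 : 0 <= n by lra.
apply: (@le_trans _ _ ((2 * n) `^ e)).
  by apply: ge0_ler_powR; rewrite ?nnegrE ?mulr_ge0.
have two_e : 2 `^ e <= 2 :> R.
  by rewrite -[X in _ <= X](@powRr1 _ 2) ?ler_powR //; lra.
by rewrite powRM // ler_pM ?powR_ge0 ?ler_powR.
Qed.

Theorem theorem6p4 (R : realType) (s : R) :
  3 / 2 < s < 3 ->
  exists C : R, 0 < C /\
  forall (M : R), 0 <= M ->
  forall (N : nat), (1 <= N)%N ->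
  forall u : field R,
    mean_zero u -> div_free u -> reality u ->
    (Hs_normsq s u <= (M ^+ 2)%:E)%E ->
    (forall (a : {fset vec}), a \in OrbN N -> forall ka : vec, ka \in a ->
       \sum_(b <- OrbN N) `|Mab N u a b|
         <= C * M ^+ 3 * (knorm R ka `^ (2 - s) + knorm R ka `^ (6 - 3 * s)))
    /\ (2 < s -> forall (a : {fset vec}), a \in OrbN N ->
          \sum_(b <- OrbN N) `|Mab N u a b| <= C * M ^+ 3)
    /\ (s <= 2 -> forall (a : {fset vec}), a \in OrbN N ->
          \sum_(b <- OrbN N) `|Mab N u a b| <= C * M ^+ 3 * (N%:R `^ (6 - 3 * s))).
Proof.
move=> /andP[s_gt _]; have s1 : 1 <= s by lra.
exists 18; split=> [|M M0 N N1 u _ udf _ uHs]; first lra.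
have orbit_bound a ka := @sum_norm_Mab_le R s M u N a ka s1 M0 udf uHs.
have M3 : 0 <= M ^+ 3 by rewrite exprn_ge0.
have orbit_rep a : a \in OrbN N -> exists2 ka, ka \in a & 1 <= knorm R ka.
  move=> aN; have [k _ ak] := OrbN_mem aN; have ka : k \in a by rewrite ak Oh_orbit_refl.
  by exists k => //; apply/knorm_ge1/(OrbN_neq0 aN ka).
split; [|split] => [a aN ka kaa|s2 a aN|s2 a aN].
- apply: le_trans (orbit_bound a ka aN kaa) _.
  have := powR_ge0 (knorm R ka) (2 - s); have := powR_ge0 (knorm R ka) (6 - 3 * s).
  nra.
- have [ka kaa ka1] := orbit_rep a aN; apply: le_trans (orbit_bound a ka aN kaa) _.
  have : knorm R ka `^ (2 - s) <= 1.
    by rewrite -[X in _ <= X](powRr0 (knorm R ka)) ler_powR //; lra.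
  nra.
- have [ka kaa _] := orbit_rep a aN; apply: le_trans (orbit_bound a ka aN kaa) _.
  have N1' : 1 <= (N%:R : R) by rewrite ler1n.
  have ka_le : 0 <= knorm R ka <= 2 * N%:R by rewrite knorm_ge0 (knorm_OrbN_le R aN kaa).
  have e01 : 0 <= 2 - s <= 1 by apply/andP; lra.
  have e_le : 2 - s <= 6 - 3 * s by lra.
  have := powR_le_double_powR ka_le N1' e01 e_le.
  by have := powR_ge0 (knorm R ka) (2 - s); nra.
Qed.
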